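(* Let $\Delta x>0$, consider the homogeneous grid $x_j=x_1+(j-1)\Delta x$, let $M_-,M_+\in\mathbb{Z}$ with $M:=M_-+M_+\ge0$, and consider the stencil $\{i-M_-,\dots,i+M_+\}$ of $M+1$ grid points. Let $f$ be a real function defined at the points $x_{i+\ell}$, $f_{i+\ell}:=f(x_{i+\ell})$, let $p_f(x)=\sum_{m=0}^{M}c_{f,m}\left(\frac{x-x_i}{\Delta x}\right)^m$ be the polynomial of degree $\le M$ interpolating $f$ at $x_{i-M_-},\dots,x_{i+M_+}$, and let $p_h(x)=\sum_{m=0}^{M}c_{h,m}\left(\frac{x-x_i}{\Delta x}\right)^m$ be the polynomial of degree $\le M$ satisfying $p_f(x)=\frac{1}{\Delta x}\int_{x-\frac12\Delta x}^{x+\frac12\Delta x}p_h(\zeta)\,d\zeta$ for all $x$. Then, with $\xi:=(x-x_i)/\Delta x$, $$p_h(x_i+\xi\Delta x)=\sum_{\ell=-M_-}^{M_+}\alpha_{h,M_-,M_+,\ell}(\xi)f_{i+\ell},\qquad p_f(x_i+\xi\Delta x)=\sum_{\ell=-M_-}^{M_+}\alpha_{f,M_-,M_+,\ell}(\xi)f_{i+\ell},$$ where $\alpha_{h,M_-,M_+,\ell}$ and $\alpha_{f,M_-,M_+,\ell}$ are polynomials of degree $M$ in $\xi$, with coefficients depending only on $(M_-,M_+,\ell)$, given by $$\alpha_{h,M_-,M_+,\ell}(\xi)=\sum_{m=0}^{M}\left(\sum_{k=0}^{\lfloor (M-m)/2\rfloor}\frac{\tau_{2k}(m+2k)!}{m!}(V_{M_-,M_+}^{-1})_{m+2k+1,\ell+M_-+1}\right)\xi^m,$$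 $$\alpha_{f,M_-,M_+,\ell}(\xi)=\sum_{m=0}^{M}(V_{M_-,M_+}^{-1})_{m+1,\ell+M_-+1}\,\xi^m.$$
   Context: $V_{M_-,M_+}\in\mathbb{R}^{(M+1)\times(M+1)}$ is the (invertible) Vandermonde matrix with entries $(V_{M_-,M_+})_{ij}=(i-1-M_-)^{j-1}$ (with $0^0=1$). The numbers $\tau_{2k}$ are defined by $\tau_0=1$ and $\tau_{2k}=\sum_{s=0}^{k-1}\frac{-\tau_{2s}}{2^{2k-2s}(2k-2s+1)!}$ for $k>0$. *)

From HB Require Import structures.
From mathcomp Require Import all_boot all_order all_algebra.
From mathcomp Require Import all_classical all_reals all_analysis.
Set Implicit Arguments. Unset Strict Implicit. Unset Printing Implicit Defensive.
Import Order.TTheory GRing.Theory Num.Theory.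
Import numFieldNormedType.Exports.
Local Open Scope ring_scope.

Fixpoint tau_seq (R : fieldType) (n : nat) : seq R :=
  match n with
  | 0 => [:: 1]
  | n'.+1 =>
      let s := tau_seq R n' in
      rcons s (\sum_(j < n'.+1)
                 - nth 0 s j / (2 ^+ (2 * (n'.+1 - j)) * ((2 * (n'.+1 - j)).+1)`!%:R))
  end.

(* tau k = tau_{2k} of the paper. *)
Definition tau (R : fieldType) (k : nat) : R := nth 0 (tau_seq R k) k.

(* Vandermonde matrix V_{M-,M+} (0-based indices): V i j = (i - M_-)^j, 0^0 = 1. *)
Definition vdm (R : fieldType) (Mm : int) (M : nat) : 'M[R]_M.+1 :=
  \matrix_(i < M.+1, j < M.+1) ((i%:Z - Mm)%:~R) ^+ j.

(* alpha_{f,M-,M+,l}(xi) with l = k - M_- (k : 'I_(M+1) is the column index l + M_-). *)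
Definition alpha_f (R : fieldType) (Mm : int) (M : nat) (k : 'I_M.+1) (xi : R) : R :=
  \sum_(m < M.+1) (invmx (vdm R Mm M)) m k * xi ^+ m.

Definition alpha_h (R : fieldType) (Mm : int) (M : nat) (k : 'I_M.+1) (xi : R) : R :=
  \sum_(m < M.+1)
    (\sum_(j < ((M - m)./2).+1)
       tau R j * (m + 2 * j)`!%:R / m`!%:R
         * (invmx (vdm R Mm M)) (inord (m + 2 * j)) k) * xi ^+ m.

From HB Require Import structures.
From mathcomp Require Import all_boot all_order all_algebra.
From mathcomp Require Import all_classical all_reals all_analysis.
From mathcomp Require Import zify ring lra.
Import Order.TTheory GRing.Theory Num.Theory.
Import numFieldNormedType.Exports.
Local Open Scope ring_scope.

(* The cell average [p |-> 1/dx \int_{x-dx/2}^{x+dx/2} p] acts on polynomials in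
   the scaled variable [(x - x_i)/dx] as the even Taylor operator
   [\sum_j D^(2j) / (2^(2j) (2j+1)!)], a unipotent operator on polynomials of
   degree <= M.  The recursion defining [tau] says exactly that
   [\sum_k tau_(2k) D^(2k)] is its inverse, so [p_h] is obtained from [p_f] by
   applying that operator.  The coefficients of [p_f] are [V^-1 f] since [p_f]
   interpolates [f] at the integer nodes [-M_-, ..., M_+], and expanding
   [D^(2k)] on monomials gives the factors [(m+2k)!/m!] of [alpha_h]. *)

Section CellAverageOperators.
Variable R : fieldType.

(* [\sum_j avg_coef j x^(2j)] is the series of [sinh(x/2)/(x/2)]; the [tau] are
   the coefficients of its reciprocal, see [tau_avg_coef_conv]. *)
Definition avg_coef (j : nat) : R := (2 ^+ (2 * j) * (2 * j).+1`!%:R)^-1.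

Definition cell_average (K : nat) (p : {poly R}) : {poly R} :=
  \sum_(j < K) avg_coef j *: p^`(2 * j).

Definition inv_cell_average (K : nat) (p : {poly R}) : {poly R} :=
  \sum_(k < K) tau R k *: p^`(2 * k).

Lemma size_tau_seq n : size (tau_seq R n) = n.+1.
Proof. by elim: n => //= n IH; rewrite size_rcons IH. Qed.

Lemma nth_tau_seq n j : (j <= n)%N -> nth 0 (tau_seq R n) j = tau R j.
Proof.
elim: n => [|n IH]; first by rewrite leqn0 => /eqP ->.
rewrite leq_eqVlt => /predU1P[-> //|lt_jn].
by rewrite /= nth_rcons size_tau_seq lt_jn IH.
Qed.

Lemma avg_coef0 : avg_coef 0 = 1.
Proof. by rewrite /avg_coef muln0 expr0 mul1r invr1. Qed.

Lemma tauS n : tau R n.+1 = - \sum_(k < n.+1) tau R k * avg_coef (n.+1 - k).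
Proof.
rewrite /tau /= nth_rcons size_tau_seq ltnn eqxx -sumrN.
by apply: eq_bigr => k _; rewrite nth_tau_seq -1?ltnS // mulNr.
Qed.

Lemma tau_avg_coef_conv n :
  \sum_(k < n.+1) tau R k * avg_coef (n - k) = (n == 0)%:R.
Proof.
case: n => [|n]; first by rewrite big_ord1 avg_coef0 mulr1.
by rewrite big_ord_recr /= subnn avg_coef0 mulr1 tauS addrN.
Qed.

Lemma sum_shift_vanishing (V : nmodType) (F : nat -> V) K k :
  (k <= K)%N -> (forall n, (K <= n)%N -> F n = 0) ->
  \sum_(j < K) F (j + k)%N = \sum_(n < K | (k <= n)%N) F n.
Proof.
move=> le_kK F0.
have -> : \sum_(j < K) F (j + k)%N = \sum_(k <= n < K + k) F n.
  by rewrite (big_addn 0 (K + k) k) addnK big_mkord.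
rewrite (big_cat_nat le_kK (leq_addr k K)) /= [X in _ + X]big1_seq ?addr0.
  by rewrite big_geq_mkord.
by move=> n /andP[_]; rewrite mem_index_iota => /andP[/F0].
Qed.

Lemma tau_avg_coef_convK (V : lmodType R) (g : nat -> V) K :
  (forall n, (K <= n)%N -> g n = 0) ->
  \sum_(k < K) tau R k *: \sum_(j < K) avg_coef j *: g (j + k)%N = g 0%N.
Proof.
case: K => [|K] g0; first by rewrite big_ord0 g0.
have shift (k : 'I_K.+1) : \sum_(j < K.+1) avg_coef j *: g (j + k)%N =
    \sum_(n < K.+1 | (k <= n)%N) avg_coef (n - k) *: g n.
  rewrite -(@sum_shift_vanishing _ (fun n => avg_coef (n - k) *: g n)).
  - by apply: eq_bigr => j _; rewrite addnK.
  - exact: ltnW.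
  - by move=> n /g0 ->; rewrite scaler0.
transitivity (\sum_(n < K.+1) \sum_(k < n.+1) (tau R k * avg_coef (n - k)) *: g n).
  under eq_bigr => k _ do rewrite shift scaler_sumr.
  rewrite (exchange_big_dep xpredT) //=; apply: eq_bigr => n _.
  rewrite (big_ord_widen_cond _ xpredT (fun k => (tau R k * avg_coef (n - k)) *: g n)
    (ltn_ord n)).
  by apply: eq_big => [k|k _]; rewrite ?ltnS // scalerA.
under eq_bigr => n _ do rewrite -scaler_suml tau_avg_coef_conv.
by rewrite big_ord_recl scale1r big1 ?addr0 // => n _; rewrite scale0r.
Qed.

Lemma cell_averageK K (p : {poly R}) :
  (size p <= K)%N -> inv_cell_average K (cell_average K p) = p.
Proof.
move=> le_pK; rewrite -[RHS]derivn0 -(@tau_avg_coef_convK _ (fun n => p^`(2 * n)) K).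
  apply: eq_bigr => k _; congr (_ *: _); rewrite raddf_sum; apply: eq_bigr => j _.
  by rewrite /= derivnZ /derivn -iterD mulnDr addnC.
move=> n le_Kn; apply/derivn_poly0/(leq_trans le_pK)/(leq_trans le_Kn).
by rewrite leq_pmull.
Qed.

End CellAverageOperators.

Arguments cell_average {R}.
Arguments inv_cell_average {R}.

Lemma sum_ord_double (V : nmodType) (F : nat -> V) K :
  \sum_(i < 2 * K) F i = \sum_(j < K) (F (2 * j)%N + F (2 * j).+1).
Proof.
elim: K => [|K IH]; first by rewrite !big_ord0.
by rewrite mulnS !big_ord_recr /= IH addrA.
Qed.

Lemma cell_average_taylor (R : numFieldType) (Q : {poly R}) K u :
  (size Q <= (2 * K).+1)%N ->
  Q.[u + 2^-1] - Q.[u - 2^-1] = (cell_average K Q^`()).[u].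
Proof.
move=> le_QK; set h : R := 2^-1.
have h2 : h + h = 1 by rewrite [RHS](splitr 1) mul1r.
rewrite !(nderiv_taylor_wide (mulrC _ _) le_QK) -sumrB big_ord_recl subrr add0r.
rewrite (sum_ord_double _
  (fun i => Q^`N(i.+1).[u] * h ^+ i.+1 - Q^`N(i.+1).[u] * (- h) ^+ i.+1)).
rewrite horner_sum; apply: eq_bigr => j _.
have -> : (- h) ^+ (2 * j).+2 = h ^+ (2 * j).+2 by rewrite -addn2 -mulnSr !exprM sqrrN.
have -> : (- h) ^+ (2 * j).+1 = - h ^+ (2 * j).+1.
  by rewrite exprSr exprM sqrrN -exprM mulrN -exprSr.
rewrite subrr addr0 -mulrBr opprK exprS -mulrDl h2 mul1r hornerZ -derivSn.
rewrite nderivn_def hornerMn -mulr_natr /avg_coef invfM -exprVn -/h.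
have fact_neq0 : (2 * j).+1`!%:R != 0 :> R by rewrite pnatr_eq0 -lt0n fact_gt0.
by field.
Qed.

Lemma Rintegral_horner {R : realType} [P Q : {poly R}] [a b : R] :
  Q^`() = P -> a < b ->
  \int[lebesgue_measure]_(z in `[a, b]) P.[z] = Q.[b] - Q.[a].
Proof.
move=> QP lt_ab.
rewrite /Rintegral (@continuous_FTC2 _ _ (horner Q) _ _ lt_ab) //.
- by move=> z; apply: continuous_subspaceT => y; exact: continuous_horner.
- split.
  + by move=> y _; exact: derivable_horner.
  + by apply: cvg_at_right_filter; exact: continuous_horner.
  + by apply: cvg_at_left_filter; exact: continuous_horner.
- by move=> y _; rewrite -derivE QP.
Qed.

Lemma poly_antiderivative {R : numFieldType} (P : {poly R}) :
  exists2 Q : {poly R}, Q^`() = P & (size Q <= (size P).+1)%N.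
Proof.
exists (\poly_(n < (size P).+1) (if n is n'.+1 then P`_n' / n%:R else 0)).
  apply/polyP => n; rewrite coef_deriv coef_poly ltnS.
  case: ltnP => [_|/(nth_default 0) ->]; last by rewrite mul0rn.
  by rewrite /= -(mulr_natr (P`_n / _)) mulfVK // pnatr_eq0.
exact: size_poly.
Qed.

Lemma integral_cell_average {R : realType} (P : {poly R}) K (c d x : R) :
  0 < d -> (size P <= K)%N ->
  \int[lebesgue_measure]_(z in `[x - d / 2, x + d / 2]) P.[(z - c) / d]
    = d * (cell_average K P).[(x - c) / d].
Proof.
move=> d_gt0 le_PK; have [Q QP le_QP] := poly_antiderivative P.
pose L : {poly R} := d^-1 *: ('X - c%:P).
have hornerL z : L.[z] = (z - c) / d by rewrite hornerZ !hornerE mulrC.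
have dQL : (d *: (Q \Po L))^`() = P \Po L.
  rewrite derivZ deriv_comp QP derivZ derivB derivX derivC subr0.
  by rewrite mulr_algr scalerA mulfV ?gt_eqF // scale1r.
under eq_Rintegral => z _ do rewrite -hornerL -horner_comp.
rewrite (Rintegral_horner dQL); last by lra.
rewrite !hornerZ !horner_comp !hornerL -mulrBr -QP -cell_average_taylor; last first.
  by rewrite (leq_trans le_QP) // ltnS (leq_trans le_PK) // leq_pmull.
by congr (d * (_.[_] - _.[_])); field; rewrite gt_eqF.
Qed.

Lemma eq_poly_horner {R : numDomainType} (p q : {poly R}) :
  (forall u, p.[u] = q.[u]) -> p = q.
Proof.
move=> pq; apply/eqP; rewrite -subr_eq0; apply/eqP.
apply: (@roots_geq_poly_eq0 _ _ [seq i%:R | i <- iota 0 (size (p - q))]).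
- by apply/allP => _ /mapP[i _ ->]; rewrite /root !hornerE pq subrr.
- by rewrite map_inj_uniq ?iota_uniq //; exact: mulrIn (oner_neq0 R).
- by rewrite size_map size_iota.
Qed.

Lemma unitmx_vdm {R : numFieldType} Mm M : vdm R Mm M \in unitmx.
Proof.
have -> : vdm R Mm M = (Vandermonde M.+1 (\row_j ((j%:Z - Mm)%:~R : R)))^T.
  by apply/matrixP => i j; rewrite !mxE.
rewrite unitmxE det_tr det_Vandermonde unitfE prodf_seq_neq0.
apply/allP => i _; rewrite prodf_seq_neq0.
apply/allP => j _; apply/implyP => lt_ij.
by rewrite !mxE -intrB intr_eq0 subr_eq0 (inj_eq (addIr _)) eqz_nat gtn_eqF.
Qed.

(* Row [n] of [invmx V *m F]; [inord] makes it junk for [n > M], never used. *)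
Definition interp_coef {R : fieldType} (Mm : int) {M : nat} (F : 'I_M.+1 -> R)
    (n : nat) : R :=
  \sum_(k < M.+1) invmx (vdm R Mm M) (inord n) k * F k.

Lemma poly_interp_coef {R : numFieldType} Mm M (c : nat -> R) (F : 'I_M.+1 -> R) :
  (forall k : 'I_M.+1, \sum_(m < M.+1) c m * ((k%:Z - Mm)%:~R) ^+ m = F k) ->
  \poly_(m < M.+1) c m = \poly_(m < M.+1) interp_coef Mm F m.
Proof.
move=> cF; apply: eq_poly => m lt_mM.
pose cv : 'cV_M.+1 := \col_n c n; pose Fv : 'cV_M.+1 := \col_k F k.
have : vdm R Mm M *m cv = Fv.
  apply/matrixP => k j; rewrite !mxE -cF.
  by apply: eq_bigr => n _; rewrite !mxE mulrC.
move/(congr1 (mulmx (invmx (vdm R Mm M)))); rewrite mulKmx ?unitmx_vdm //.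
move/matrixP/(_ (inord m) 0); rewrite !mxE inordK // => ->.
by apply: eq_bigr => k _; rewrite mxE.
Qed.

Lemma sum_alpha_f {R : fieldType} Mm M (F : 'I_M.+1 -> R) u :
  \sum_(k < M.+1) alpha_f Mm k u * F k
    = (\poly_(m < M.+1) interp_coef Mm F m).[u].
Proof.
rewrite horner_poly; under eq_bigr do rewrite big_distrl.
rewrite exchange_big; apply: eq_bigr => m _ /=.
rewrite /interp_coef inord_val big_distrl.
by apply: eq_bigr => k _; rewrite mulrAC.
Qed.

Lemma sum_alpha_h {R : fieldType} Mm M (F : 'I_M.+1 -> R) u :
  \sum_(k < M.+1) alpha_h Mm k u * F k
    = (\poly_(m < M.+1) \sum_(j < ((M - m)./2).+1)
         tau R j * (m + 2 * j)`!%:R / m`!%:R * interp_coef Mm F (m + 2 * j)).[u].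
Proof.
rewrite horner_poly; under eq_bigr do rewrite big_distrl.
rewrite exchange_big; apply: eq_bigr => m _ /=.
under eq_bigr do rewrite !big_distrl.
rewrite big_distrl exchange_big; apply: eq_bigr => j _ /=.
rewrite /interp_coef mulr_sumr big_distrl.
by apply: eq_bigr => k _; rewrite /= mulrAC mulrA.
Qed.

Lemma inv_cell_average_poly {R : numFieldType} M (c : nat -> R) :
  inv_cell_average M.+1 (\poly_(n < M.+1) c n)
    = \poly_(m < M.+1) \sum_(j < ((M - m)./2).+1)
        tau R j * (m + 2 * j)`!%:R / m`!%:R * c (m + 2 * j)%N.
Proof.
apply/polyP => m; rewrite coef_poly coef_sum.
have fact_neq0 n : n`!%:R != 0 :> R by rewrite pnatr_eq0 -lt0n fact_gt0.
have coef_term (k : 'I_M.+1) : (tau R k *: (\poly_(n < M.+1) c n)^`(2 * k))`_m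
    = if (m + 2 * k < M.+1)%N
      then tau R k * (m + 2 * k)`!%:R / m`!%:R * c (m + 2 * k)%N else 0.
  rewrite coefZ coef_derivn coef_poly addnC.
  case: ifP => _; last by rewrite mul0rn mulr0.
  rewrite -(ffact_fact (leq_addl m (2 * k))) addnK natrM mulrA mulfK //.
  by rewrite -mulrA mulr_natl.
under eq_bigr do rewrite coef_term.
rewrite -big_mkcond /=; case: ltnP => [lt_mM|le_Mm]; last first.
  by rewrite big_pred0 // => k; rewrite ltnNge (leq_trans le_Mm) ?leq_addr.
rewrite (big_ord_widen_cond M.+1 xpredT
  (fun j => tau R j * (m + 2 * j)`!%:R / m`!%:R * c (m + 2 * j)%N)).
  by apply: eq_bigl => k; rewrite /= [in RHS]ltnS geq_half_double -muln2; lia.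
by rewrite ltnS leq_half_double -muln2; lia.
Qed.

Theorem proposition1 (R : realType) (dx x1 : R) (i Mm Mp : int) (M : nat)
  (f : R -> R) (cf ch : nat -> R) :
  0 < dx ->
  Mm + Mp = M%:Z ->
  let xg := fun j : int => x1 + (j - 1)%:~R * dx in
  let xi := xg i in
  let pf := fun x : R => \sum_(m < M.+1) cf m * ((x - xi) / dx) ^+ m in
  let ph := fun x : R => \sum_(m < M.+1) ch m * ((x - xi) / dx) ^+ m in
  (forall l : int, - Mm <= l <= Mp -> pf (xg (i + l)) = f (xg (i + l))) ->
  (forall x : R,
     pf x = dx^-1 * \int[lebesgue_measure]_(z in `[x - dx / 2, x + dx / 2]) ph z) ->
  forall xi' : R,
    ph (xi + xi' * dx)
      = \sum_(k < M.+1) @alpha_h R Mm M k xi' * f (xg (i + (k%:Z - Mm)))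
    /\ pf (xi + xi' * dx)
      = \sum_(k < M.+1) @alpha_f R Mm M k xi' * f (xg (i + (k%:Z - Mm))).
Proof.
move=> dx_gt0 MmMp xg xi pf ph pf_nodes pf_avg u.
have dx_neq0 : dx != 0 by rewrite gt_eqF.
have scaled_node l : (xg (i + l) - xi) / dx = l%:~R.
  by rewrite /xi /xg [i + l - 1]addrAC intrD; field.
have scaled v : (xi + v * dx - xi) / dx = v by field.
pose Pf := \poly_(m < M.+1) cf m; pose Ph := \poly_(m < M.+1) ch m.
have pfE : pf = fun x => Pf.[(x - xi) / dx] by apply/funext => x; rewrite horner_poly.
have phE : ph = fun x => Ph.[(x - xi) / dx] by apply/funext => x; rewrite horner_poly.
pose F (k : 'I_M.+1) := f (xg (i + (k%:Z - Mm))).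
have Pf_interp : Pf = \poly_(m < M.+1) interp_coef Mm F m.
  apply: poly_interp_coef => k; rewrite /F -pf_nodes; first by rewrite /pf scaled_node.
  by move: (ltn_ord k); lia.
have Pf_avg : Pf = cell_average M.+1 Ph.
  apply: eq_poly_horner => v; have := pf_avg (xi + v * dx).
  rewrite pfE phE (@integral_cell_average _ _ M.+1) ?size_poly // mulKf //.
  by rewrite /= scaled.
have Ph_inv : Ph = inv_cell_average M.+1 Pf by rewrite Pf_avg cell_averageK ?size_poly.
rewrite sum_alpha_h sum_alpha_f -inv_cell_average_poly -Pf_interp -Ph_inv.
by rewrite phE pfE /= scaled.
Qed.
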